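(* Assume (A1) and let $S(x,t)=\inf_{v\in\mathbb{R}^n}\{J(x-tv)+tH^*(v)\}$ for $x\in\mathbb{R}^n$, $t>0$. Let $v^{(0)}\in\mathrm{int}\,\mathrm{dom}\,H^*$ and $d\in\mathrm{dom}\,J$. Then $$\lim_{t\to+\infty}\frac{S(d+tv^{(0)},t)}{t}=H^*(v^{(0)}).$$ If moreover $0\in\mathrm{dom}\,J$ and, for $t>0$, $F(x,t)=\inf_{v\in\mathrm{int}\,\mathrm{dom}\,H^*}\{tD_{H^*}(x/t,v)+J^*(\nabla H^*(v))\}$, then $$\lim_{t\to+\infty}\frac{F(tv^{(0)},t)}{t}=0.$$
   Context: $\Gamma_0(\mathbb{R}^n)$ denotes the set of proper, convex, lower semicontinuous functions $\mathbb{R}^n\to\mathbb{R}\cup\{+\infty\}$; $f^*$ is the Legendre–Fenchel transform. A function $g$ is 1-coercive if $g(x)/\|x\|\to+\infty$ as $\|x\|\to\infty$. A function $f\in\Gamma_0(\mathbb{R}^n)$ is Legendre if: $\mathrm{int}\,\mathrm{dom}\,f\neq\emptyset$; $f$ is differentiable on $\mathrm{int}\,\mathrm{dom}\,f$; $\partial f(x)=\emptyset$ for $x\in\mathrm{dom}\,f\setminus\mathrm{int}\,\mathrm{dom}\,f$ and $\partial f(x)=\{\nabla f(x)\}$ on $\mathrm{int}\,\mathrm{dom}\,f$; and $f$ is strictly convex on $\mathrm{int}\,\mathrm{dom}\,f$. $D_f(x,u)=f(x)-f(u)-\langle\nabla f(u),x-u\rangle$. Assumption (A1): $J,H\in\Gamma_0(\mathbb{R}^n)$,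 $J$ is 1-coercive, and $H$ is a Legendre function. *)

(* R^n is modelled by row vectors 'rV[R]_n. *)
From HB Require Import structures.
From mathcomp Require Import all_boot all_order all_algebra.
From mathcomp Require Import all_classical all_reals all_analysis.
Set Implicit Arguments. Unset Strict Implicit. Unset Printing Implicit Defensive.
Import Order.TTheory GRing.Theory Num.Theory.
Import numFieldNormedType.Exports.
Local Open Scope classical_set_scope.
Local Open Scope ring_scope.

Section ConvexDefs.
Variables (R : realType) (n : nat).
Notation V := 'rV[R]_n.

Definition dotv (u v : V) : R := \sum_(i < n) u ord0 i * v ord0 i.
Definition enorm (u : V) : R := Num.sqrt (dotv u u).

Local Open Scope ereal_scope.

Definition edom (f : V -> \bar R) : set V := [set x | f x < +oo].

Definition proper_fun (f : V -> \bar R) :=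
  (forall x, f x != -oo) /\ (exists x, f x < +oo).

Definition econvex (f : V -> \bar R) :=
  forall (x y : V) (l : R), (0 < l < 1)%R ->
    f (l *: x + (1 - l) *: y)%R <= l%:E * f x + (1 - l)%R%:E * f y.

Definition Gamma0 (f : V -> \bar R) :=
  [/\ proper_fun f, econvex f & lower_semicontinuous f].

Definition lfconj (f : V -> \bar R) (y : V) : \bar R :=
  ereal_sup [set (dotv x y)%:E - f x | x in [set: V]].

Definition coercive1 (f : V -> \bar R) :=
  forall M : R, exists r : R, forall x : V,
    (r <= enorm x)%R -> M%:E <= f x * ((enorm x)^-1)%:E.

(* real-valued version of f (meaningful on the domain) *)
Definition freal (f : V -> \bar R) : V -> R := fun x => fine (f x).

Definition grad (f : V -> \bar R) (u : V) : V :=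
  \row_(i < n) ('d (freal f) u (delta_mx ord0 i : V)).

Definition subdiff (f : V -> \bar R) (x : V) : set V :=
  [set g | edom f x /\ forall y, f x + (dotv g (y - x)%R)%:E <= f y].

Definition strictly_convex_on (f : V -> \bar R) (A : set V) :=
  forall (x y : V) (l : R), A x -> A y -> x != y -> (0 < l < 1)%R ->
    f (l *: x + (1 - l) *: y)%R < l%:E * f x + (1 - l)%R%:E * f y.

Definition legendre (f : V -> \bar R) :=
  Gamma0 f /\
  [/\ interior (edom f) !=set0,
      (forall x, interior (edom f) x -> differentiable (freal f) x),
      (forall x, edom f x -> ~ interior (edom f) x -> subdiff f x = set0),
      (forall x, interior (edom f) x -> subdiff f x = [set grad f x]) &
      strictly_convex_on f (interior (edom f))].

Definition bregman (f : V -> \bar R) (x u : V) : \bar R :=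
  f x - f u - (dotv (grad f u) (x - u)%R)%:E.

End ConvexDefs.

(* Fix v0 interior to dom H^* and let qs attain the supremum defining H^*(v0);
   it exists because H - <., v0> has bounded sublevel sets (Fenchel-Young
   tested near v0) and is lower semicontinuous.  Fenchel-Young for J and for H
   at qs gives, for t > 0,
     <qs, d> - J^*(qs) + t H^*(v0) <= S(d + t v0, t) <= J(d) + t H^*(v0),
   where J^*(qs) is finite since J is 1-coercive; dividing by t yields the
   first limit.  For F we show that grad H^*(v) is the maximizer at v (it is
   unique by strict convexity of the Legendre function H, and depends
   continuously on v by a compactness argument), so D_{H^*} >= 0 by
   Fenchel-Young and -J(0) <= F(t v0, t) <= J^*(qs), whence F(t v0, t)/t -> 0. *)

From HB Require Import structures.
From mathcomp Require Import all_boot all_order all_algebra.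
From mathcomp Require Import all_classical all_reals all_analysis.
From mathcomp Require Import ring lra.
Import Order.TTheory GRing.Theory Num.Theory.
Import numFieldNormedType.Exports.
Local Open Scope classical_set_scope.
Local Open Scope ring_scope.
Set Implicit Arguments. Unset Strict Implicit. Unset Printing Implicit Defensive.

Section InnerProduct.
Variables (R : realType) (n : nat).
Notation V := 'rV[R]_n.
Implicit Types (x y z : V).

Lemma dotvC x y : dotv x y = dotv y x.
Proof. by apply: eq_bigr => i _; rewrite mulrC. Qed.

Lemma dotvDr x y z : dotv x (y + z) = dotv x y + dotv x z.
Proof. by rewrite /dotv -big_split; apply: eq_bigr => i _; rewrite mxE mulrDr. Qed.

Lemma dotvDl x y z : dotv (y + z) x = dotv y x + dotv z x.
Proof. by rewrite dotvC dotvDr !(dotvC x). Qed.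

Lemma dotvZr (a : R) x y : dotv x (a *: y) = a * dotv x y.
Proof. by rewrite /dotv mulr_sumr; apply: eq_bigr => i _; rewrite mxE; ring. Qed.

Lemma dotvZl (a : R) x y : dotv (a *: y) x = a * dotv y x.
Proof. by rewrite dotvC dotvZr dotvC. Qed.

Lemma dotvBr x y z : dotv x (y - z) = dotv x y - dotv x z.
Proof. by rewrite dotvDr -scaleN1r dotvZr mulN1r. Qed.

Lemma dotvBl x y z : dotv (y - z) x = dotv y x - dotv z x.
Proof. by rewrite dotvC dotvBr !(dotvC x). Qed.

Lemma dotv0r x : dotv x 0 = 0.
Proof. by rewrite /dotv big1 // => i _; rewrite mxE mulr0. Qed.

Lemma dotv0l x : dotv 0 x = 0.
Proof. by rewrite dotvC dotv0r. Qed.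

Lemma dotv_delta x (i : 'I_n) : dotv x (delta_mx ord0 i) = x ord0 i.
Proof.
rewrite /dotv (bigD1 i) //= big1 ?addr0; first by rewrite mxE !eqxx mulr1.
by move=> j ji; rewrite mxE (negbTE ji) andbF mulr0.
Qed.

(* The norm of 'rV[R]_n is the largest absolute value of a coordinate. *)
Lemma coord_le_norm x (i : 'I_n) : `|x ord0 i| <= `|x|.
Proof.
rewrite -[`|x|]/(mx_norm x) mx_normrE; apply/bigmax_geP; right.
by exists (ord0, i).
Qed.

Lemma norm_le_coord x (M : R) :
  0 <= M -> (forall i, `|x ord0 i| <= M) -> `|x| <= M.
Proof.
move=> M0 xM; rewrite -[`|x|]/(mx_norm x) mx_normrE; apply/bigmax_leP; split => //.
by move=> [a b] _ /=; rewrite (ord1 a); exact: xM.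
Qed.

Lemma norm_le_enorm x : `|x| <= enorm x.
Proof.
apply: norm_le_coord; first exact: sqrtr_ge0.
move=> i; rewrite -sqrtr_sqr /enorm ler_sqrt; last first.
  by rewrite /dotv sumr_ge0 // => j _; rewrite -expr2 sqr_ge0.
rewrite /dotv (bigD1 i) //= expr2 lerDl sumr_ge0 // => j _.
by rewrite -expr2 sqr_ge0.
Qed.

Definition norm1 x : R := \sum_(i < n) `|x ord0 i|.

Lemma norm1_ge0 x : 0 <= norm1 x.
Proof. by apply: sumr_ge0 => i _. Qed.

Lemma norm1_le x : norm1 x <= (n%:R + 1) * `|x|.
Proof.
rewrite mulrDl mul1r; apply: le_trans (_ : n%:R * `|x| <= _); last by rewrite lerDl.
apply: le_trans (ler_sum _ (fun i _ => coord_le_norm x i)) _.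
by rewrite sumr_const card_ord mulr_natl.
Qed.

Lemma dotv_le_norm1 x y : `|dotv x y| <= norm1 x * `|y|.
Proof.
rewrite /dotv /norm1 mulr_suml; apply: le_trans (ler_norm_sum _ _ _) _.
apply: ler_sum => i _; rewrite normrM; apply: ler_wpM2l => //; exact: coord_le_norm.
Qed.

Definition dotl (q : V) : V -> R := fun x => dotv q x.

Lemma dotl_is_linear (q : V) : linear (dotl q).
Proof.
move=> a x y; rewrite /dotl /dotv /= scaler_sumr -big_split /=.
by apply: eq_bigr => i _; rewrite !mxE /GRing.scale /=; ring.
Qed.
HB.instance Definition _ (q : V) :=
  GRing.isLinear.Build R V R *:%R (dotl q) (dotl_is_linear q).

Lemma dotl_continuous (q : V) : continuous (dotl q).
Proof.
apply: bounded_linear_continuous; apply/linear_boundedP.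
near=> r => x; apply: le_trans (dotv_le_norm1 q x) _; exact: ler_wpM2r.
Unshelve. all: by end_near. Qed.

Lemma dotv_near (w q : V) (e : R) : 0 < e ->
  \forall y \near q, `|dotv y w - dotv q w| < e.
Proof.
move=> e0; have /cvgrPdist_lt /(_ e e0) := @dotl_continuous w q.
by apply: filterS => y /=; rewrite /dotl -normrN opprB !(dotvC w).
Qed.

Lemma closed_ball_compact (c : V) (r : R) : 0 < r -> compact (closed_ball c r).
Proof.
move=> r0; apply: bounded_closed_compact; last exact: closed_ball_closed.
rewrite /bounded_set /= /bounded_near.
near=> M => x; rewrite closed_ballE // /closed_ball_ /= => cx.
have : `|x| <= `|c| + r.
  have -> : x = c - (c - x) by rewrite opprB addrC subrK.
  by apply: le_trans (ler_normB _ _) _; rewrite lerD2l.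
move/le_trans; apply; near: M; apply: nbhs_pinfty_ge; exact: num_real.
Unshelve. all: by end_near. Qed.

Lemma interior_closed_ball (A : set V) (w : V) : interior A w ->
  exists2 del : R, 0 < del & forall y, `|y - w| <= del -> A y.
Proof.
move=> /nbhs_ballP [e e0]; rewrite -ball_normE => Be.
exists (e / 2); first by rewrite divr_gt0.
move=> y yw; apply: Be; rewrite /ball_ /= -normrN opprB.
by apply: le_lt_trans yw _; rewrite ltr_pdivrMr // ltr_pMr // ltr1n.
Qed.

End InnerProduct.

(* A lower semicontinuous function strictly above a level [a] on a compact
   set is uniformly above some real level [b > a] there.  This replaces the
   Weierstrass theorem for functions valued in the extended reals. *)
Section LowerSemicontinuity.
Variables (R : realType) (n : nat).
Notation V := 'rV[R]_n.
Local Open Scope ereal_scope.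

Lemma ereal_between (a : R) (y : \bar R) :
  a%:E < y -> exists c : R, (a < c)%R /\ c%:E < y.
Proof.
case: y => [y| |] //.
- rewrite lte_fin => ay; exists ((a + y) / 2)%R; rewrite lte_fin; split.
  + by rewrite ltr_pdivlMr // mulrDr mulr1 ltrD2l.
  + by rewrite ltr_pdivrMr // mulrDr mulr1 ltrD2r.
- by move=> _; exists (a + 1)%R; rewrite ltrDl ltry.
Qed.

Lemma lsc_compact_lb (f : V -> \bar R) (K : set V) (a : \bar R) :
  lower_semicontinuous f -> compact K -> a != +oo ->
  (forall z, K z -> exists c : R, a < c%:E /\ c%:E < f z) ->
  exists b : R, a < b%:E /\ forall z, K z -> b%:E < f z.
Proof.
move=> lsc cK ainf H.
have [c0 ac0] : exists c0 : R, a < c0%:E.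
  case: a H ainf => [r _ _| // | _ _]; last by exists 0%R; rewrite ltNyr.
  by exists (r + 1)%R; rewrite lte_fin ltrDl.
(* cover K by the open sets {f > c} for the pairs (z, c) given by H *)
pose D := [set ic : V * R | K ic.1 /\ a < ic.2%:E /\ ic.2%:E < f ic.1].
pose g := fun ic : V * R => [set y | ic.2%:E < f y].
have := cK; rewrite compact_cover => /(_ _ D g) [].
- by move=> i _; exact: (proj1 (lower_semicontinuousP f) lsc i.2).
- by move=> z Kz; have [c [ac cf]] := H z Kz; exists (z, c).
move=> D' D'D cov.
exists (\big[Order.min/c0]_(j <- finmap.enum_fset D') j.2)%R; split.
- rewrite big_seq; elim/big_ind: _ => // [x y ax ay|j /D'D].
    by rewrite /Order.min; case: ifP.
  by rewrite inE => -[_ []].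
- move=> z /cov [j /= jD' gj]; apply: le_lt_trans gj.
  by rewrite lee_fin; exact: ge_bigmin_seq.
Qed.

End LowerSemicontinuity.

Section Conjugate.
Variables (R : realType) (n : nat).
Notation V := 'rV[R]_n.
Local Open Scope ereal_scope.

Lemma proper_fin (f : V -> \bar R) (x : V) : proper_fun f -> edom f x ->
  f x \is a fin_num.
Proof. by move=> pf fx; rewrite fin_numElt fx andbT ltNye pf.1. Qed.

Lemma fenchel_young (H : V -> \bar R) (q w : V) :
  (dotv q w)%:E - H q <= lfconj H w.
Proof. by apply: ereal_sup_ubound; exists q. Qed.

Lemma conj_gt_ninf (H : V -> \bar R) (w : V) : proper_fun H -> -oo < lfconj H w.
Proof.
move=> [pn [x0 x0f]]; apply: lt_le_trans (fenchel_young H x0 w).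
by move: (pn x0) x0f; case: (H x0) => [h| |] //= _ _; rewrite -EFinB ltNyr.
Qed.

Lemma conj_fin (H : V -> \bar R) (w : V) : proper_fun H -> edom (lfconj H) w ->
  lfconj H w \is a fin_num.
Proof. by move=> pH wd; rewrite fin_numElt wd andbT conj_gt_ninf. Qed.

Lemma fenchel_young_fin (H : V -> \bar R) (q w : V) :
  proper_fun H -> edom (lfconj H) w ->
  (dotv q w - fine (lfconj H w))%:E <= H q.
Proof.
move=> pH wd; have FY := fenchel_young H q w.
rewrite -(fineK (conj_fin pH wd)) in FY; move: FY (pH.1 q).
case: (H q) => [r| |] //= FY _; last by rewrite leey.
by rewrite -EFinB lee_fin in FY; rewrite lee_fin; lra.
Qed.

Lemma lsc_sub_dotv (H : V -> \bar R) (w : V) : lower_semicontinuous H ->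
  lower_semicontinuous (fun q => H q - (dotv q w)%:E).
Proof.
move=> lH x a /ereal_between [c [ac cH]].
have : (c + dotv x w)%:E < H x.
  move: cH; case: (H x) => [h| |] //; rewrite ?ltry //.
  by rewrite -EFinB !lte_fin => ?; lra.
case/lH => U Ux HU.
exists (U `&` [set y | `|dotv y w - dotv x w| < c - a]%R).
  by apply: filterI => //; apply: dotv_near; rewrite subr_gt0.
move=> y [/HU Uy /= dy]; move: Uy; case: (H y) => [h| |] // => [|_]; last by rewrite ltry.
rewrite -EFinB !lte_fin => hy.
by move: dy; rewrite ltr_norml => /andP[dy1 dy2]; lra.
Qed.

Lemma Gamma0_bounded_below_ball (J : V -> \bar R) (c : V) (r : R) :
  Gamma0 J -> (0 < r)%R ->
  exists b : R, forall z, (`|c - z| <= r)%R -> b%:E < J z.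
Proof.
move=> [pJ _ lJ] r0.
have [|b [_ Hb]] := lsc_compact_lb lJ (closed_ball_compact (c := c) r0) (a := -oo) isT.
  move=> z _; move: (pJ.1 z); case: (J z) => [j| |] // _.
  - by exists (j - 1)%R; rewrite ltNyr lte_fin ltrBlDr ltrDl.
  - by exists 0%R; rewrite ltNyr ltry.
by exists b => z cz; apply: Hb; rewrite closed_ballE.
Qed.

(* The conjugate of a 1-coercive function of Gamma_0 is finite everywhere:
   <x, p> - J x is bounded above on a ball by the lower bound of J, and is
   negative outside it by coercivity. *)
Lemma coercive_conj_finite (J : V -> \bar R) (p : V) :
  Gamma0 J -> coercive1 J -> lfconj J p < +oo.
Proof.
move=> GJ cJ; have [pJ _ _] := GJ.
have [r Hr] := cJ (norm1 p + 1)%R.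
pose rho := (`|r| + 1)%R.
have rho0 : (0 < rho)%R by rewrite /rho ltr_wpDl.
have [b Hb] := Gamma0_bounded_below_ball 0 GJ rho0.
apply: (@le_lt_trans _ _ (Order.max (norm1 p * rho - b)%R 0%R)%:E); last exact: ltry.
apply: ge_ereal_sup => _ [x _ <-].
have hdot : (dotv x p <= norm1 p * `|x|)%R.
  by rewrite dotvC; apply: le_trans (ler_norm _) (dotv_le_norm1 _ _).
move: (pJ.1 x) (Hb x) (Hr x); case: (J x) => [j| |] //= _ Hbx Hrx; last first.
  by rewrite addeNy leNye.
rewrite -EFinD lee_fin le_max; apply/orP.
have [xs|xl] := leP (`|x|)%R rho.
- left; apply: lerB; first exact: le_trans hdot (ler_wpM2l (norm1_ge0 _) xs).
  by move: Hbx; rewrite sub0r normrN => /(_ xs); rewrite lte_fin => /ltW.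
- right; rewrite subr_le0.
  have ex : (rho < enorm x)%R by apply: lt_le_trans xl (norm_le_enorm x).
  have e0 : (0 < enorm x)%R by apply: lt_trans ex.
  have /Hrx : (r <= enorm x)%R.
    by apply: ltW; apply: le_lt_trans ex; rewrite /rho (le_trans (ler_norm r)) // lerDl.
  rewrite lee_pdivlMr // -EFinM lee_fin => hj.
  apply: le_trans hdot (le_trans _ hj).
  apply: le_trans (_ : (norm1 p + 1) * `|x| <= _)%R.
    by apply: ler_wpM2r => //; rewrite lerDl.
  by apply: ler_wpM2l; [rewrite addr_ge0 ?norm1_ge0 | exact: norm_le_enorm].
Qed.

End Conjugate.

Section ConjugateMaximizer.
Variables (R : realType) (n : nat) (H : 'rV[R]_n -> \bar R).
Notation V := 'rV[R]_n.
Local Open Scope ereal_scope.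

Definition conj_maximizer (w q : V) : Prop :=
  H q = (dotv q w - fine (lfconj H w))%:E.

Lemma norm_scale_delta (del : R) (i : 'I_n) : (0 <= del)%R ->
  (`|del *: (delta_mx ord0 i : V)| <= del)%R.
Proof.
move=> d0; apply: norm_le_coord => // j; rewrite !mxE.
by case: (_ && _); rewrite ?mulr1 ?mulr0 ?normr0 // ger0_norm.
Qed.

(* For [w] interior to dom H^*, the tilted function H - <., w> has bounded
   sublevel sets: testing Fenchel-Young at w +- del e_i bounds the i-th
   coordinate. *)
Lemma conj_sublevel_bounded (w : V) (c : R) :
  proper_fun H -> interior (edom (lfconj H)) w ->
  exists2 rho : R, (0 < rho)%R &
    forall q, H q <= (dotv q w + c)%:E -> (`|q| <= rho)%R.
Proof.
move=> pH wi.
have [del del0 Bd] := interior_closed_ball wi.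
pose wp (i : 'I_n) : V := (w + del *: (delta_mx ord0 i : V))%R.
pose wm (i : 'I_n) : V := (w - del *: (delta_mx ord0 i : V))%R.
have wpd i : edom (lfconj H) (wp i).
  by apply: Bd; rewrite /wp addrC addKr norm_scale_delta // ltW.
have wmd i : edom (lfconj H) (wm i).
  by apply: Bd; rewrite /wm addrC addKr normrN norm_scale_delta // ltW.
pose C := (\sum_i (`|fine (lfconj H (wp i))| + `|fine (lfconj H (wm i))|))%R.
have termC i : (`|fine (lfconj H (wp i))| + `|fine (lfconj H (wm i))| <= C)%R.
  by rewrite /C (bigD1 i) //= lerDl; apply: sumr_ge0 => j _; rewrite addr_ge0.
have coord_bound q i : (dotv q w + del * `|q ord0 i| - C)%:E <= H q.
  have ep : dotv q (wp i) = (dotv q w + del * q ord0 i)%R.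
    by rewrite dotvDr dotvZr dotv_delta.
  have em : dotv q (wm i) = (dotv q w - del * q ord0 i)%R.
    by rewrite dotvBr dotvZr dotv_delta.
  have := fenchel_young_fin q pH (wpd i); have := fenchel_young_fin q pH (wmd i).
  rewrite ep em; have := termC i; set a := fine _; set b := fine _ => hC.
  have := ler_norm a; have := ler_norm b; have := normr_ge0 a; have := normr_ge0 b.
  case: (H q) => [x| |]; rewrite ?leey // !lee_fin => ? ? ? ? ? ?.
  by have [qi0|qi0] := leP 0%R (q ord0 i);
    [rewrite ger0_norm | rewrite ltr0_norm]; lra.
exists ((`|c| + `|C|) / del + 1)%R.
  by rewrite ltr_wpDl // divr_ge0 // ?addr_ge0 // ltW.
move=> q hq; apply: norm_le_coord => [|i].
  by rewrite addr_ge0 // divr_ge0 // ?addr_ge0 // ltW.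
move: (coord_bound q i) hq; case: (H q) => [x| |]; rewrite ?lee_fin ?leey // => h1 h2.
have : (del * `|q ord0 i| <= `|c| + `|C|)%R.
  by have := ler_norm c; have := ler_norm C; lra.
by rewrite -ler_pdivlMl // => hh; apply: le_trans hh _; rewrite mulrC lerDl.
Qed.

(* The supremum defining H^*(w) is attained when [w] is interior to dom H^*:
   otherwise H - <., w> + H^*(w) would be bounded away from 0 both on a large
   ball (by lower semicontinuity) and outside it (by the previous lemma). *)
Lemma conj_maximizer_exists (w : V) : Gamma0 H -> interior (edom (lfconj H)) w ->
  exists q, conj_maximizer w q.
Proof.
move=> [pH _ lH] wi.
have fw : lfconj H w \is a fin_num := conj_fin pH (interior_subset wi).
set s := fine (lfconj H w).
have [rho rho0 inK] := conj_sublevel_bounded (- s + 1) pH wi.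
apply: contrapT => none.
have gt q : (- s)%:E < H q - (dotv q w)%:E.
  have := fenchel_young_fin q pH (interior_subset wi); rewrite -/s.
  case E: (H q) => [h| |]; rewrite ?lee_fin ?ltry //.
  rewrite -EFinB lte_fin => hh; rewrite lt_neqAle; apply/andP; split; last by lra.
  apply/negP => /eqP hs; apply: none; exists q; rewrite /conj_maximizer E.
  by rewrite -/s; congr (_%:E); lra.
have [b [sb Hb]] := lsc_compact_lb (lsc_sub_dotv (w := w) lH)
   (closed_ball_compact (c := 0) rho0) (a := (- s)%:E) isT
   (fun z _ => ereal_between (gt z)).
rewrite lte_fin in sb.
pose eta := Order.min (b + s)%R 1%R.
have eta0 : (0 < eta)%R by rewrite lt_min ltr01 andbT; lra.
have etab : (eta <= b + s)%R by rewrite ge_min lexx.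
have eta1 : (eta <= 1)%R by rewrite ge_min lexx orbT.
have [_ [q _ <-]] := ub_ereal_sup_adherent eta0 fw.
rewrite -/(lfconj H w) -(fineK fw) -/s.
move: (pH.1 q) (Hb q) (inK q); case: (H q) => [h| |] //= _; rewrite -!EFinD lte_fin.
have [qK|qK] := leP (`|q|)%R rho.
- rewrite closed_ballE // /closed_ball_ /= sub0r normrN lte_fin => /(_ qK) ? _; lra.
- move=> _; rewrite lee_fin => hK.
  have : ~~ (h <= dotv q w + (- s + 1))%R by apply/negP => /hK.
  rewrite -ltNge lte_fin => ?; lra.
Qed.

Lemma conj_maximizer_subdiff (w q : V) : proper_fun H -> edom (lfconj H) w ->
  conj_maximizer w q -> subdiff H q w.
Proof.
move=> pH wd Hq; split; first by rewrite /edom /= Hq ltry.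
move=> y; rewrite Hq -EFinD; apply: le_trans (fenchel_young_fin y pH wd).
by rewrite lee_fin dotvBr (dotvC w y) (dotvC w q); lra.
Qed.

(* A Legendre function has no subgradient on the boundary of its domain, so
   maximizers lie in the interior of dom H. *)
Lemma conj_maximizer_interior (w q : V) : legendre H -> edom (lfconj H) w ->
  conj_maximizer w q -> interior (edom H) q.
Proof.
move=> [[pH _ _] [_ _ Lbd _ _]] wd Hq; apply: contrapT => nq.
have qd : edom H q by rewrite /edom /= Hq ltry.
by have := Lbd q qd nq; rewrite -subset0 => /(_ w (conj_maximizer_subdiff pH wd Hq)).
Qed.

(* Strict convexity on the interior of dom H makes the maximizer unique: the
   midpoint of two maximizers would beat the supremum. *)
Lemma conj_maximizer_unique (w q1 q2 : V) : legendre H -> edom (lfconj H) w ->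
  conj_maximizer w q1 -> conj_maximizer w q2 -> q1 = q2.
Proof.
move=> LH wd H1 H2; have [[pH _ _] [_ _ _ _ Lsc]] := LH.
have i1 := conj_maximizer_interior LH wd H1.
have i2 := conj_maximizer_interior LH wd H2.
have [//|neq] := eqVneq q1 q2; exfalso.
have l01 : (0 < (2^-1 : R) < 1)%R by rewrite invr_gt0 ltr0n /= invf_lt1 // ltr1n.
have := Lsc q1 q2 (2^-1)%R i1 i2 neq l01.
set m := (2^-1 *: q1 + (1 - 2^-1) *: q2)%R.
have := fenchel_young_fin m pH wd; rewrite H1 H2 -!EFinM -EFinD.
case: (H m) => [h| |] //=; rewrite ?lee_fin ?lte_fin.
by rewrite /m dotvDl !dotvZl; lra.
Qed.

Lemma conj_maximizer_subgrad (v w q : V) : proper_fun H ->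
  edom (lfconj H) w -> conj_maximizer v q ->
  (dotv q (w - v) <= fine (lfconj H w) - fine (lfconj H v))%R.
Proof.
by move=> pH wd Hq; have := fenchel_young_fin q pH wd; rewrite Hq lee_fin dotvBr; lra.
Qed.

(* On the segment from a maximizer [qs] at [v] to a maximizer [q] at [w], the
   Fenchel-Young gap at [v] is at most <z - qs, w - v>, by convexity of H and
   the subgradient inequality. *)
Lemma conj_maximizer_segment (v w qs q z : V) (lam : R) : Gamma0 H ->
  edom (lfconj H) w -> conj_maximizer v qs -> conj_maximizer w q ->
  (0 < lam < 1)%R -> z = (lam *: q + (1 - lam) *: qs)%R ->
  H z <= (dotv z v - fine (lfconj H v) + dotv (z - qs) (w - v))%:E.
Proof.
move=> [pH cH _] wd Hqs Hq lam01 ->.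
have sub := conj_maximizer_subgrad pH wd Hqs.
have := cH q qs lam lam01; rewrite Hq Hqs -!EFinM -EFinD => /le_trans; apply.
have -> : (lam *: q + (1 - lam) *: qs - qs = lam *: (q - qs))%R.
  by apply/rowP => i; rewrite !mxE; ring.
rewrite lee_fin dotvZl dotvBl !dotvBr dotvDl !dotvZl.
by move: lam01 sub => /andP[l0 l1]; rewrite dotvBr; nra.
Qed.

(* On the sphere of radius [e] around the maximizer [qs], the gap
   H - <., v> + H^*(v) is bounded below by a positive constant: it is lower
   semicontinuous, and positive there by uniqueness of the maximizer. *)
Lemma conj_maximizer_isolated (v qs : V) (e : R) : legendre H ->
  edom (lfconj H) v -> conj_maximizer v qs -> (0 < e)%R ->
  exists2 m : R, (0 < m)%R & forall z, (`|z - qs| = e)%R ->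
    (dotv z v - fine (lfconj H v) + m)%:E < H z.
Proof.
move=> LH vd Hqs e0; have [[pH _ lH] _] := LH.
set sv := fine (lfconj H v).
pose S := closed_ball qs e `&` ~` ball qs e.
have cS : compact S.
  apply: (subclosed_compact _ (closed_ball_compact (c := qs) e0)); last exact: subIsetl.
  apply: closedI; first exact: closed_ball_closed.
  exact/open_closedC/ball_open.
have gap z : S z -> exists c : R, (- sv < c)%R /\ c%:E < H z - (dotv z v)%:E.
  move=> [_ Sz]; apply: ereal_between.
  have := fenchel_young_fin z pH vd; rewrite -/sv.
  case E: (H z) => [h| |] //=; last by rewrite ltry.
  rewrite -EFinD !lee_fin lte_fin => hh; rewrite lt_neqAle; apply/andP; split; last by lra.
  apply/negP => /eqP hs; apply: Sz.
  have -> : z = qs.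
    apply: (conj_maximizer_unique LH vd _ Hqs).
    by rewrite /conj_maximizer E -/sv; congr (_%:E); lra.
  exact: ballxx.
have [b [sb Hb]] := lsc_compact_lb (lsc_sub_dotv (w := v) lH) cS (a := (- sv)%:E) isT gap.
exists (b + sv)%R; first by rewrite lte_fin in sb; lra.
move=> z ze; have /Hb : S z.
  split; first by rewrite closed_ballE // /closed_ball_ /= -normrN opprB ze.
  by rewrite -ball_normE /ball_ /= -normrN opprB ze ltxx.
move: (pH.1 z); case: (H z) => [h| |] // _ => [|_]; last exact: ltry.
by rewrite -EFinB !lte_fin => ?; lra.
Qed.

(* Maximizers depend continuously on the point: for a maximizer [q] at [w]
   with |q - qs| > e, the point of the segment [qs, q] at distance [e] from
   [qs] contradicts the two previous lemmas as soon as |w - v| is small. *)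
Lemma conj_maximizer_continuous (v qs : V) (e : R) : legendre H ->
  edom (lfconj H) v -> conj_maximizer v qs -> (0 < e)%R ->
  exists2 del : R, (0 < del)%R & forall w q, (`|w - v| < del)%R ->
    edom (lfconj H) w -> conj_maximizer w q -> (`|q - qs| <= e)%R.
Proof.
move=> LH vd Hqs e0.
have [m m0 Hm] := conj_maximizer_isolated LH vd Hqs e0.
have ne0 : (0 < (n%:R + 1) * e)%R by rewrite mulr_gt0 // ltr_wpDl.
exists (m / ((n%:R + 1) * e))%R; first by rewrite divr_gt0.
move=> w q hw wd Hq; rewrite leNgt; apply/negP => qe.
have d0 : (0 < `|q - qs|)%R by apply: lt_trans qe.
pose lam := (e / `|q - qs|)%R.
have lam01 : (0 < lam < 1)%R by rewrite divr_gt0 //= ltr_pdivrMr // mul1r.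
set z := (lam *: q + (1 - lam) *: qs)%R.
have nz : (`|z - qs| = e)%R.
  have -> : (z - qs = lam *: (q - qs))%R by apply/rowP => i; rewrite !mxE; ring.
  by rewrite normrZ gtr0_norm ?divr_gt0 // divfK // gt_eqF.
have := Hm z nz; have := conj_maximizer_segment (proj1 LH) wd Hqs Hq lam01 (erefl z).
case: (H z) => [h| |] //; rewrite ?ltry // lee_fin lte_fin => seg iso.
have : (dotv (z - qs) (w - v) <= (n%:R + 1) * e * `|w - v|)%R.
  apply: le_trans (ler_norm _) (le_trans (dotv_le_norm1 _ _) _).
  by apply: ler_wpM2r => //; rewrite -nz; exact: norm1_le.
have : ((n%:R + 1) * e * `|w - v| < m)%R by move: hw; rewrite ltr_pdivlMr // mulrC.
lra.
Qed.

(* The gradient of H^* at an interior point of its domain is the maximizer: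
   H^*(w) - H^*(v) lies between <qs, w - v> and <qw, w - v> (subgradient
   inequalities at [v] and [w]), and qw tends to qs as w tends to v. *)
Lemma grad_conj_maximizer (v qs : V) : legendre H ->
  interior (edom (lfconj H)) v -> conj_maximizer v qs -> grad (lfconj H) v = qs.
Proof.
move=> LH vi Hqs; have [GH _] := LH; have [pH _ _] := GH.
have vd := interior_subset vi.
suff D : 'd (freal (lfconj H)) v = dotl qs :> (V -> R).
  by apply/rowP => i; rewrite /grad mxE D /dotl dotv_delta.
apply: diff_unique; first exact: dotl_continuous.
apply/eqaddoP => e e0.
have [del0 del00 Bd] := interior_closed_ball (nbhs_interior vi).
have n1 : (0 < n%:R + 1 :> R)%R by rewrite ltr_wpDl.
have en0 : (0 < e / (n%:R + 1))%R by rewrite divr_gt0.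
have [del1 del10 Hc] := conj_maximizer_continuous LH vd Hqs en0.
near=> h.
have hd : (`|h| < Order.min del0 del1)%R.
  by near: h; apply: (nbhs0_lt (V:=V)); rewrite lt_min del00 del10.
move: hd; rewrite lt_min => /andP[hd0 hd1].
set w := (h + v)%R.
have hwv : (w - v = h)%R by rewrite /w addrK.
have wi : interior (edom (lfconj H)) w by apply: Bd; rewrite hwv ltW.
have wd := interior_subset wi.
have [qw Hqw] := conj_maximizer_exists GH wi.
have cq : (`|qw - qs| <= e / (n%:R + 1))%R by apply: (Hc w qw) => //; rewrite hwv.
have lo := conj_maximizer_subgrad pH wd Hqs.
have up := conj_maximizer_subgrad pH vd Hqw.
have hb : (`|dotv (qw - qs) h| <= e * `|h|)%R.
  apply: le_trans (dotv_le_norm1 _ _) _; apply: ler_wpM2r => //.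
  apply: le_trans (norm1_le _) (le_trans (ler_wpM2l (ltW n1) cq) _).
  by rewrite mulrC divfK // gt_eqF.
rewrite !fctE /= -/w /freal /dotl; move: lo up hb.
rewrite -opprB dotvBl -hwv !dotvBr opprB.
set fw := fine _; set fv := fine _ => lo up hb.
rewrite ger0_norm; last by lra.
by apply: le_trans hb; apply: le_trans _ (ler_norm _); lra.
Unshelve. all: by end_near. Qed.

End ConjugateMaximizer.

Section Asymptotics.
Variable R : realType.

Lemma ereal_squeeze (f : R -> \bar R) (s A B : R) :
  (forall t, 0 < t -> ((A + t * s)%:E <= f t)%E /\ (f t <= (B + t * s)%:E)%E) ->
  (f t * (t^-1)%:E)%E @[t --> +oo] --> s%:E.
Proof.
move=> hf.
have fin t : (0 < t)%R -> f t \is a fin_num.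
  move=> /hf[h1 h2].
  by rewrite fin_numElt (lt_le_trans _ h1) ?ltNyr // (le_lt_trans h2) ?ltry.
apply: cvg_EFin.
  near=> t; have t0 : (0 < t)%R by near: t; apply: nbhs_pinfty_gt.
  by rewrite fin_numM // fin.
apply/cvgrPdist_le => eps eps0; near=> t.
have t0 : (0 < t)%R by near: t; apply: nbhs_pinfty_gt.
have tK : ((`|A| + `|B|) / eps < t)%R.
  by near: t; apply: nbhs_pinfty_gt; exact: num_real.
have [h1 h2] := hf t t0; have ff := fin t t0.
rewrite /= -(fineK ff) -EFinM /=.
rewrite -(fineK ff) !lee_fin in h1 h2.
have -> : (s - fine (f t) * t^-1 = (t * s - fine (f t)) / t)%R.
  by field; rewrite gt_eqF.
rewrite normrM normfV (gtr0_norm t0) ler_pdivrMr //.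
apply: le_trans (_ : `|A| + `|B| <= _)%R.
  rewrite ler_norml; apply/andP; split.
    by have := ler_norm B; have := ler_norm A; have := normr_ge0 A; lra.
  by have := ler_norm (- A)%R; rewrite normrN; have := normr_ge0 B; lra.
by move: tK; rewrite ltr_pdivrMr // mulrC => /ltW.
Unshelve. all: by end_near. Qed.

End Asymptotics.

Section ValueFunctions.
Variables (R : realType) (n : nat) (J H : 'rV[R]_n -> \bar R).
Notation V := 'rV[R]_n.
Local Open Scope ereal_scope.

Definition hopf_lax (x : V) (t : R) : \bar R :=
  ereal_inf [set J (x - t *: v)%R + t%:E * lfconj H v | v in [set: V]].

Definition bregman_value (x : V) (t : R) : \bar R :=
  ereal_inf [set t%:E * bregman (lfconj H) (t^-1 *: x) v
                 + lfconj J (grad (lfconj H) v)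
            | v in interior (edom (lfconj H))].

(* Lower bound: Fenchel-Young for J at [qs] and for H at every [v], where
   [qs] is the maximizer at [v0], make the dependence on [v] disappear. *)
Lemma hopf_lax_ge (v0 d qs : V) (c t : R) : proper_fun J -> proper_fun H ->
  conj_maximizer H v0 qs -> lfconj J qs = c%:E -> (0 < t)%R ->
  (dotv qs d - c + t * fine (lfconj H v0))%:E <= hopf_lax (d + t *: v0) t.
Proof.
move=> pJ pH Hqs Hc t0; apply: le_ereal_inf_tmp => _ [v _ <-].
set y := (d + t *: v0 - t *: v)%R.
have fj := fenchel_young J y qs; rewrite Hc in fj.
have fh := fenchel_young H qs v; rewrite Hqs in fh.
have hy : dotv y qs = (dotv d qs + t * dotv v0 qs - t * dotv v qs)%R.
  by rewrite /y dotvBl dotvDl !dotvZl.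
move: fj fh (conj_gt_ninf v pH) (pJ.1 y).
case: (J y) => [j| |] //; case: (lfconj H v) => [h| |] //.
- move=> fj fh _ _; move: fj fh; rewrite -!EFinB -EFinM -EFinD !lee_fin => fj fh.
  have fh' := ler_wpM2l (ltW t0) fh.
  by rewrite (dotvC qs v) (dotvC qs v0) in fh'; rewrite (dotvC qs d); nra.
- by move=> *; rewrite gt0_muley ?lte_fin // addey // leey.
- by move=> *; rewrite -EFinM addye // leey.
- by move=> *; rewrite gt0_muley ?lte_fin // addye // leey.
Qed.

(* Upper bound: the choice v = v0 in the infimum. *)
Lemma hopf_lax_le (v0 d : V) (t s0 jd : R) :
  lfconj H v0 = s0%:E -> J d = jd%:E ->
  hopf_lax (d + t *: v0) t <= (jd + t * s0)%:E.
Proof.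
move=> Hs0 Hjd; apply: ereal_inf_lbound; exists v0 => //.
by rewrite addrK Hs0 Hjd -EFinM -EFinD.
Qed.

Lemma bregman_self (f : V -> \bar R) (x : V) : f x \is a fin_num ->
  bregman f x x = 0.
Proof. by move=> fx; rewrite /bregman subrr dotv0r subee // sube0. Qed.

(* D_{H^*}(x, v) >= 0: the gradient of H^* at [v] is the maximizer [qv],
   and Fenchel-Young at [x] for [qv] is exactly this inequality. *)
Lemma bregman_conj_ge0 (x v : V) : legendre H -> edom (lfconj H) x ->
  interior (edom (lfconj H)) v -> 0 <= bregman (lfconj H) x v.
Proof.
move=> LH xd vi; have [GH _] := LH; have [pH _ _] := GH.
have [qv Hqv] := conj_maximizer_exists GH vi.
have fv := conj_fin pH (interior_subset vi).
rewrite /bregman (grad_conj_maximizer LH vi Hqv) -(fineK fv).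
have := fenchel_young_fin qv pH xd; rewrite Hqv lee_fin.
rewrite -(fineK (conj_fin pH xd)) -!EFinB lee_fin dotvBr; lra.
Qed.

(* Lower bound: D_{H^*} >= 0 and J^* >= -J(0). *)
Lemma bregman_value_ge (v0 : V) (j0 t : R) : legendre H -> proper_fun J ->
  edom (lfconj H) v0 -> J 0%R = j0%:E -> (0 < t)%R ->
  (- j0)%:E <= bregman_value (t *: v0) t.
Proof.
move=> LH pJ v0d Hj0 t0; apply: le_ereal_inf_tmp => _ [v vi <-].
rewrite scalerA mulVf ?gt_eqF // scale1r.
have fj := fenchel_young J 0%R (grad (lfconj H) v); rewrite Hj0 dotv0l sub0e in fj.
apply: lee_paddl fj; apply: mule_ge0; first by rewrite lee_fin ltW.
exact: bregman_conj_ge0.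
Qed.

(* Upper bound: the choice v = v0 in the infimum, where D_{H^*} vanishes. *)
Lemma bregman_value_le (v0 qs : V) (c t : R) : legendre H ->
  interior (edom (lfconj H)) v0 -> conj_maximizer H v0 qs ->
  lfconj J qs = c%:E -> (0 < t)%R ->
  bregman_value (t *: v0) t <= c%:E.
Proof.
move=> LH v0i Hqs Hc t0; have [[pH _ _] _] := LH.
apply: ereal_inf_lbound; exists v0 => //.
rewrite scalerA mulVf ?gt_eqF // scale1r (grad_conj_maximizer LH v0i Hqs) Hc.
by rewrite bregman_self ?mule0 ?add0e // (conj_fin pH (interior_subset v0i)).
Qed.

End ValueFunctions.

Theorem mainTheorem8 (R : realType) (n : nat) (J H : 'rV[R]_n -> \bar R)
  (v0 d : 'rV[R]_n) :
  Gamma0 J -> Gamma0 H -> coercive1 J -> legendre H ->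
  interior (edom (lfconj H)) v0 -> edom J d ->
  let S := fun (x : 'rV[R]_n) (t : R) =>
    ereal_inf [set (J (x - t *: v)%R + t%:E * lfconj H v)%E | v in [set: 'rV[R]_n]] in
  let F := fun (x : 'rV[R]_n) (t : R) =>
    ereal_inf [set (t%:E * bregman (lfconj H) (t^-1 *: x) v
                    + lfconj J (grad (lfconj H) v))%E
              | v in interior (edom (lfconj H))] in
  ((S (d + t *: v0)%R t * (t^-1)%:E)%E @[t --> +oo] --> lfconj H v0)
  /\ (edom J 0 ->
      (F (t *: v0) t * (t^-1)%:E)%E @[t --> +oo] --> (0 : \bar R)).
Proof.
move=> GJ GH cJ LH v0i dJ S F.
have [pJ _ _] := GJ; have [pH _ _] := GH.
have [qs Hqs] := conj_maximizer_exists GH v0i.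
have Hs0 := fineK (conj_fin pH (interior_subset v0i)).
have Hc := fineK (conj_fin (H := J) pJ (coercive_conj_finite qs GJ cJ)).
split.
- rewrite -Hs0; apply: (ereal_squeeze (A := dotv qs d - fine (lfconj J qs))
                                      (B := fine (J d))) => t t0; split.
  + exact: hopf_lax_ge pJ pH Hqs (esym Hc) t0.
  + exact: hopf_lax_le (esym Hs0) (esym (fineK (proper_fin pJ dJ))).
- move=> J0; apply: (ereal_squeeze (s := 0) (A := - fine (J 0%R))
                                   (B := fine (lfconj J qs))) => t t0.
  rewrite mulr0 !addr0; split.
  + exact: bregman_value_ge LH pJ (interior_subset v0i) (esym (fineK (proper_fin pJ J0))) t0.
  + exact: bregman_value_le LH v0i Hqs (esym Hc) t0.
Qed.
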